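(* Let $L$ be a regular Lie algebra (finite-dimensional, over an infinite field $K$) and let $I$ be an ideal of $L$ with $0\neq I\neq L$. Then the quotient algebra $L/I$ is nilpotent.
   Context: All algebras are finite-dimensional over an infinite field $K$. For $x\in L$ write $\chi_{\operatorname{ad} x}(t)=\det(t-\operatorname{ad}x)=\sum_{i}a_i(x)t^i$. The rank $\operatorname{rk}L$ is the minimal $r$ such that $a_r(x)\neq 0$ for some $x\in L$. An element $x$ is regular if $a_{\operatorname{rk}L}(x)\neq 0$. A Lie algebra is regular if each of its nonzero elements is regular. *)

From HB Require Import structures.
From mathcomp Require Import all_boot all_order all_algebra.
Set Implicit Arguments. Unset Strict Implicit. Unset Printing Implicit Defensive.
Import GRing.Theory.
Local Open Scope ring_scope.

(* A Lie algebra of dimension n over K, presented on the coordinate space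
   'rV[K]_n by its bracket. *)
Definition is_lie_bracket (K : fieldType) (n : nat)
  (br : 'rV[K]_n -> 'rV[K]_n -> 'rV[K]_n) : Prop :=
  [/\ (forall (a : K) x y z, br (a *: x + y) z = a *: br x z + br y z),
      (forall (a : K) x y z, br z (a *: x + y) = a *: br z x + br z y),
      (forall x, br x x = 0)
    & (forall x y z, br x (br y z) + br y (br z x) + br z (br x y) = 0)].

Definition infinite_field (K : fieldType) : Prop :=
  forall s : seq K, exists x : K, x \notin s.

Definition ad_mx (K : fieldType) (n : nat)
  (br : 'rV[K]_n -> 'rV[K]_n -> 'rV[K]_n) (x : 'rV[K]_n) : 'M[K]_n :=
  lin1_mx (br x).

Definition chi_coef (K : fieldType) (n : nat)
  (br : 'rV[K]_n -> 'rV[K]_n -> 'rV[K]_n) (i : nat) (x : 'rV[K]_n) : K :=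
  (char_poly (ad_mx br x))`_i.

Definition is_lie_rank (K : fieldType) (n : nat)
  (br : 'rV[K]_n -> 'rV[K]_n -> 'rV[K]_n) (r : nat) : Prop :=
  (exists x, chi_coef br r x != 0) /\
  (forall r', (r' < r)%N -> forall x, chi_coef br r' x = 0).

Definition regular_elt (K : fieldType) (n : nat)
  (br : 'rV[K]_n -> 'rV[K]_n -> 'rV[K]_n) (x : 'rV[K]_n) : Prop :=
  exists r, is_lie_rank br r /\ chi_coef br r x != 0.

Definition regular_lie (K : fieldType) (n : nat)
  (br : 'rV[K]_n -> 'rV[K]_n -> 'rV[K]_n) : Prop :=
  forall x : 'rV[K]_n, x != 0 -> regular_elt br x.

(* I (the row space of the matrix I) is an ideal of L. *)
Definition is_lie_ideal (K : fieldType) (n : nat)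
  (br : 'rV[K]_n -> 'rV[K]_n -> 'rV[K]_n) (I : 'M[K]_n) : Prop :=
  forall x v : 'rV[K]_n, (v <= I)%MS -> (br x v <= I)%MS.

Definition iter_br (K : fieldType) (n : nat)
  (br : 'rV[K]_n -> 'rV[K]_n -> 'rV[K]_n) (xs : seq 'rV[K]_n) (y : 'rV[K]_n) :=
  foldr br y xs.

(* L/I is nilpotent: for some k, every k-fold bracket of elements of L/I
   vanishes, i.e. every k-fold bracket of representatives lies in I. *)
Definition quotient_nilpotent (K : fieldType) (n : nat)
  (br : 'rV[K]_n -> 'rV[K]_n -> 'rV[K]_n) (I : 'M[K]_n) : Prop :=
  exists k : nat, forall (xs : seq 'rV[K]_n) (y : 'rV[K]_n),
    size xs = k -> (iter_br br xs y <= I)%MS.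

From mathcomp Require Import all_boot all_order all_algebra.
From mathcomp Require Import zify.
From Stdlib Require Import Lia ClassicalDescription.
Set Implicit Arguments. Unset Strict Implicit. Unset Printing Implicit Defensive.
Import GRing.Theory.
Local Open Scope ring_scope.

(* The proof has two halves.
   (1) Regularity makes every ad z nilpotent on L/I.  In a basis of L whose
       first m = dim I vectors span I, ad z is block lower triangular, so
       chi_{ad z} = chi_{ad z on I} * chi_{ad z on L/I}.  A nonzero x in I acts
       trivially on L/I, so regularity of x gives rk L = r >= k = dim L/I with
       a nonzero coefficient of degree r - k in chi_{ad x on I}.  If chi_{ad z on
       L/I} <> t^k, it has a nonzero coefficient of degree b < k; on the line
       through x and z both coefficients are polynomials in the parameter, so
       (K being infinite) they are simultaneously nonzero at some y, and then
       chi_{ad y} has a nonzero coefficient of degree <= r - k + b < r,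
       contradicting the definition of the rank.
   (2) A relative Engel theorem: if every ad z is nilpotent modulo the ideal I,
       then L/I is nilpotent.  The Engel lemma is proved by induction on the
       dimension of a subalgebra, through maximal subalgebras; L/I is then
       climbed by a flag of ideals from I to L. *)

Section BracketAlgebra.
Variables (K : fieldType) (n : nat) (br : 'rV[K]_n -> 'rV[K]_n -> 'rV[K]_n).
Hypothesis HL : is_lie_bracket br.

Lemma br0l z : br 0 z = 0.
Proof.
have [brL _ _ _] := HL; have := brL 1 0 0 z; rewrite !scale1r addr0 => E.
by have := congr1 (fun t => t - br 0 z) E; rewrite subrr addrK => /esym.
Qed.

Lemma br0r z : br z 0 = 0.
Proof.
have [_ brR _ _] := HL; have := brR 1 0 0 z; rewrite !scale1r addr0 => E.
by have := congr1 (fun t => t - br z 0) E; rewrite subrr addrK => /esym.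
Qed.

Lemma brDl x y z : br (x + y) z = br x z + br y z.
Proof. by have [brL _ _ _] := HL; rewrite -[x]scale1r brL !scale1r. Qed.

Lemma brDr x y z : br z (x + y) = br z x + br z y.
Proof. by have [_ brR _ _] := HL; rewrite -[x]scale1r brR !scale1r. Qed.

Lemma brZl a x z : br (a *: x) z = a *: br x z.
Proof. by have [brL _ _ _] := HL; rewrite -[a *: x]addr0 brL br0l addr0. Qed.

Lemma brZr a x z : br z (a *: x) = a *: br z x.
Proof. by have [_ brR _ _] := HL; rewrite -[a *: x]addr0 brR br0r addr0. Qed.

Lemma br_anti x y : br x y = - br y x.
Proof.
have [_ _ brxx _] := HL; have := brxx (x + y).
by rewrite brDl !brDr !brxx add0r addr0 => /eqP; rewrite addr_eq0 => /eqP.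
Qed.

Lemma brNr x z : br z (- x) = - br z x.
Proof. by rewrite -scaleN1r brZr scaleN1r. Qed.

Lemma br_jac h v u : br h (br v u) = br (br h v) u + br v (br h u).
Proof.
have [_ _ _ J] := HL; have := J h v u.
rewrite [br u h]br_anti brNr [br u (br h v)]br_anti.
by move/eqP; rewrite -addrA -opprD subr_eq0 => /eqP ->; rewrite addrC.
Qed.

Lemma br_addsmxl (H W : 'M[K]_n) (v u h : 'rV[K]_n) :
  (forall h', (h' <= H)%MS -> (br h' u <= W)%MS) -> (br v u <= W)%MS ->
  (h <= H + v)%MS -> (br h u <= W)%MS.
Proof.
move=> brH brv /sub_addsmxP [[a b] ->] /=.
rewrite (mx11_scalar b) mul_scalar_mx brDl brZl.
by apply: addmx_sub; [apply: brH; exact: submxMl | exact: scalemx_sub].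
Qed.

Lemma br_addsmxr (H W : 'M[K]_n) (v x w : 'rV[K]_n) :
  (forall h, (h <= H)%MS -> (br x h <= W)%MS) -> (br x v <= W)%MS ->
  (w <= H + v)%MS -> (br x w <= W)%MS.
Proof.
move=> brH brv /sub_addsmxP [[a b] ->] /=.
rewrite (mx11_scalar b) mul_scalar_mx brDr brZr.
by apply: addmx_sub; [apply: brH; exact: submxMl | exact: scalemx_sub].
Qed.

Lemma ad_mxE v z : v *m ad_mx br z = br z v.
Proof.
rewrite /ad_mx /lin1_mx [v in RHS]matrix_sum_delta big_ord1.
rewrite (big_morph (br z) (fun x y => brDr x y z) (br0r z)).
apply/rowP=> j; rewrite mxE summxE; apply: eq_bigr => i _.
by rewrite brZr !mxE.
Qed.

Lemma ad_mx_linear a x y : ad_mx br (a *: x + y) = a *: ad_mx br x + ad_mx br y.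
Proof.
have [brL _ _ _] := HL.
by apply/matrixP => i j; rewrite /ad_mx /lin1_mx !mxE brL !mxE.
Qed.

Lemma iter_ad z v j : iter j (br z) v = v *m (ad_mx br z) ^+ j.
Proof.
elim: j => [|j IH]; first by rewrite expr0 mulmx1.
by rewrite iterS IH exprSr -mulmxE mulmxA ad_mxE.
Qed.

End BracketAlgebra.

(* Over an infinite field, two nonzero polynomials have a common non-root
   (their product has fewer roots than K has elements). *)
Lemma common_nonroot (K : fieldType) (p q : {poly K}) :
  infinite_field K -> p != 0 -> q != 0 -> exists t, p.[t] != 0 /\ q.[t] != 0.
Proof.
move=> Kinf p0 q0; have pq0 : p * q != 0 by rewrite mulf_neq0.
have [s [s_uniq s_size]] : exists s : seq K, uniq s /\ size s = size (p * q).
  elim: (size (p * q)) => [|N [s [us ss]]]; first by exists [::].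
  by have [x xs] := Kinf s; exists (x :: s); rewrite /= xs us ss.
have [all_roots|] := boolP (all (root (p * q)) s).
  by have := max_poly_roots pq0 all_roots s_uniq; rewrite s_size ltnn.
case/allPn => t _; rewrite rootM negb_or => /andP [pt qt].
by exists t.
Qed.

(* If p has a nonzero coefficient in degree a and q in degree b, then p * q
   has a nonzero coefficient in some degree <= a + b: the product of the
   lowest nonzero coefficients survives. *)
Lemma coefM_low (K : fieldType) (p q : {poly K}) a b :
  p`_a != 0 -> q`_b != 0 -> exists i, (i <= a + b)%N /\ (p * q)`_i != 0.
Proof.
move=> pa qb.
have [al pal minp] := ex_minnP (ex_intro (fun i => p`_i != 0) a pa).
have [be qbe minq] := ex_minnP (ex_intro (fun i => q`_i != 0) b qb).
have p_low j : (j < al)%N -> p`_j = 0.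
  by move=> lt; apply/eqP/negP => /negP/minp; rewrite leqNgt lt.
have q_low j : (j < be)%N -> q`_j = 0.
  by move=> lt; apply/eqP/negP => /negP/minq; rewrite leqNgt lt.
exists (al + be)%N; split; first by rewrite leq_add ?minp ?minq.
rewrite coefM (bigD1 (Ordinal (ltn_addr be (ltnSn al)))) //= addKn big1 ?addr0.
  exact: mulf_neq0.
move=> [j lj] /= nj; have [ltj|gej] := ltnP j al; first by rewrite p_low ?mul0r.
have nej : j != al by apply: contraNneq nj => ej; apply/eqP/val_inj.
by rewrite q_low ?mulr0 //; move: gej nej (lj); lia.
Qed.

Lemma monic_low_coef (K : fieldType) (p : {poly K}) k :
  p \is monic -> size p = k.+1 -> p != 'X^k -> exists2 b, (b < k)%N & p`_b != 0.
Proof.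
move=> p_monic p_size pnX.
have [b pb|low0] := pickP (fun b : 'I_k => p`_b != 0); first by exists b.
case/eqP: pnX; apply/polyP => j; rewrite coefXn.
case: (ltngtP j k) => [jk|kj|->].
- by move/negbFE: (low0 (Ordinal jk)) => /eqP.
- by rewrite nth_default // p_size.
- by move/monicP: p_monic; rewrite lead_coefE p_size.
Qed.

Lemma char_poly_line (K : fieldType) p (A B : 'M[K]_p) i :
  exists f : {poly K}, forall t, (char_poly (A + t *: B))`_i = f.[t].
Proof.
pose Ap : 'M[{poly K}]_p := map_mx polyC A + 'X *: map_mx polyC B.
exists (char_poly Ap)`_i => t.
have -> : A + t *: B = map_mx (horner_eval t) Ap.
  by apply/matrixP => u v; rewrite !mxE /horner_eval !hornerE.
by rewrite -map_char_poly coef_map.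
Qed.

Lemma char_poly_conj (K : fieldType) p (P A : 'M[K]_p) :
  P \in unitmx -> char_poly (P *m A *m invmx P) = char_poly A.
Proof.
move=> Pu; rewrite /char_poly /char_poly_mx.
pose Pc := map_mx (@polyC K) P; pose Qc := map_mx (@polyC K) (invmx P).
have PQ : Pc *m Qc = 1%:M by rewrite -map_mxM mulmxV // map_mx1.
have -> : 'X%:M - map_mx polyC (P *m A *m invmx P) = Pc *m ('X%:M - map_mx polyC A) *m Qc.
  rewrite mulmxBr mulmxBl !map_mxM; congr (_ - _).
  by rewrite mul_mx_scalar -scalemxAl PQ scalemx1.
rewrite !det_mulmx mulrC mulrA -det_mulmx.
by rewrite -map_mxM mulVmx // map_mx1 det1 mul1r.
Qed.

Lemma char_poly_lblock (K : fieldType) m k (A : 'M[K]_m) (C : 'M[K]_(k, m)) (B : 'M[K]_k) :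
  char_poly (block_mx A 0 C B) = char_poly A * char_poly B.
Proof.
rewrite /char_poly /char_poly_mx map_block_mx (scalar_mx_block m k).
by rewrite opp_block_mx add_block_mx map_mx0 subr0 det_lblock.
Qed.

Lemma lblock_exp (K : fieldType) m k j (X : 'M[K]_(m + k)) : ursubmx X = 0 ->
  ursubmx (X ^+ j) = 0 /\ drsubmx (X ^+ j) = (drsubmx X) ^+ j.
Proof.
move=> ur; elim: j => [|j [urj drj]].
  rewrite !expr0 -[1]/(1%:M : 'M_(m + k)) (scalar_mx_block m k).
  by rewrite block_mxKur block_mxKdr.
rewrite !exprSr -!mulmxE -[X ^+ j]submxK -[X in _ *m X]submxK urj ur mulmx_block.
by rewrite block_mxKur block_mxKdr mulmx0 mul0mx mulmx0 !add0r drj.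
Qed.

(* Cayley-Hamilton: a matrix with characteristic polynomial X^p is nilpotent. *)
Lemma char_poly_Xn_nilpotent (K : fieldType) p (A : 'M[K]_p) :
  char_poly A = 'X^p -> A ^+ p = 0.
Proof.
case: p A => [|p] A chiA; first by apply/matrixP => [[]].
by have := Cayley_Hamilton A; rewrite chiA rmorphXn /= horner_mx_X.
Qed.

(* A satisfiable property of naturals with an upper bound has a largest
   witness (classically: the property need not be decidable). *)
Lemma classical_ex_maxn (P : nat -> Prop) b :
  (exists j, P j) -> (forall j, P j -> (j <= b)%N) ->
  exists j, P j /\ forall j', P j' -> (j' <= j)%N.
Proof.
move=> [j0 Pj0] Pbound.
pose Pb j := if excluded_middle_informative (P j) then true else false.
have PbP j : reflect (P j) (Pb j).
  by rewrite /Pb; case: excluded_middle_informative => Pj; constructor.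
have exPb : exists j, Pb j by exists j0; apply/PbP.
have ubPb j : Pb j -> (j <= b)%N by move/PbP; apply: Pbound.
case: (ex_maxnP exPb ubPb) => j /PbP Pj maxj.
by exists j; split=> // j' /PbP /maxj.
Qed.

(* Every satisfiable property of subspaces of K^n has an inclusion-maximal
   witness (take one of maximal rank). *)
Lemma ex_maximal_mx (K : fieldType) n (Q : 'M[K]_n -> Prop) :
  (exists M, Q M) -> exists M, Q M /\ forall S, Q S -> ~~ (M < S)%MS.
Proof.
move=> [M0 QM0].
pose P r := exists M, Q M /\ \rank M = r.
have rank_bound r : P r -> (r <= n)%N by move=> [M [_ <-]]; exact: rank_leq_col.
have [r [[M [QM rM]] maxr]] := classical_ex_maxn (ex_intro P _ (ex_intro _ M0 (conj QM0 erefl))) rank_bound.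
exists M; split=> // S QS; apply/negP => /rank_ltmx.
by rewrite rM ltnNge maxr //; exists S.
Qed.

Section RelativeEngel.
Variables (K : fieldType) (n : nat) (br : 'rV[K]_n -> 'rV[K]_n -> 'rV[K]_n).
Hypothesis HL : is_lie_bracket br.

Definition is_subalg (H : 'M[K]_n) : Prop :=
  forall u v, (u <= H)%MS -> (v <= H)%MS -> (br u v <= H)%MS.

Definition stabilizes (H W : 'M[K]_n) : Prop :=
  forall h w, (h <= H)%MS -> (w <= W)%MS -> (br h w <= W)%MS.

Lemma subalg_adjoin (H : 'M[K]_n) (v : 'rV[K]_n) :
  is_subalg H -> (forall h, (h <= H)%MS -> (br h v <= H)%MS) -> is_subalg (H + v)%MS.
Proof.
move=> sH nHv x y xHv yHv.
have inHv u : (u <= H)%MS -> (u <= H + v)%MS by move/submx_trans; apply; exact: addsmxSl.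
have H_y h : (h <= H)%MS -> (br h y <= H + v)%MS.
  by move=> hH; apply: (br_addsmxr HL) yHv => [h' h'H|]; apply/inHv; [exact: sH | exact: nHv].
apply: (br_addsmxl HL) H_y _ xHv; apply: (br_addsmxr HL) yHv => [h hH|].
  by rewrite (br_anti HL) eqmx_opp; apply/inHv/nHv.
by have [_ _ -> _] := HL; exact: sub0mx.
Qed.

Lemma last_iterate_outside (H' W M : 'M[K]_n) (v u0 : 'rV[K]_n) N :
  (forall w, (w <= W)%MS -> (br v w <= W)%MS) ->
  (forall w, (w <= M)%MS -> (br v w <= M)%MS) ->
  (forall h, (h <= H')%MS -> (br h v <= H')%MS) ->
  (u0 <= M)%MS -> ~~ (u0 <= W)%MS -> (forall h, (h <= H')%MS -> (br h u0 <= W)%MS) ->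
  (iter N (br v) u0 <= W)%MS ->
  exists u, [/\ (u <= M)%MS, ~~ (u <= W)%MS, (br v u <= W)%MS
              & forall h, (h <= H')%MS -> (br h u <= W)%MS].
Proof.
move=> vW vM nH'v u0M u0W H'u0 iterW.
pose u j := iter j (br v) u0.
have u_inv j : (u j <= M)%MS /\ forall h, (h <= H')%MS -> (br h (u j) <= W)%MS.
  elim: j => [|j [ujM H'uj]] //=; split; first exact: vM.
  move=> h hH'; rewrite (br_jac HL); apply: addmx_sub; first exact/H'uj/nH'v.
  exact/vW/H'uj.
have [j0 uj0W minj0] := ex_minnP (ex_intro (fun j => (u j <= W)%MS) N iterW).
case: j0 uj0W minj0 => [|j] ujW minj; first by rewrite ujW in u0W.
have [ujM H'uj] := u_inv j.
by exists (u j); split=> //; apply/negP => /minj; rewrite ltnn.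
Qed.

Variable I : 'M[K]_n.
Hypothesis I_ideal : is_lie_ideal br I.

Lemma maximal_subalg (H : 'M[K]_n) : is_subalg H -> (I <= H)%MS -> ~~ (H <= I)%MS ->
  exists H', [/\ is_subalg H', (I <= H')%MS, (H' < H)%MS &
    forall S, is_subalg S -> (H' < S)%MS -> (S <= H)%MS -> (H <= S)%MS].
Proof.
move=> sH IH nHI.
pose Q S := [/\ is_subalg S, (I <= S)%MS & (S < H)%MS].
have [|H' [[sH' IH' H'H] maxH']] := ex_maximal_mx (Q := Q).
  by exists I; split=> //; [move=> u v _; exact: I_ideal | rewrite ltmxE IH].
exists H'; split=> // S sS H'S SH; apply/negPn/negP => nHS.
suff QS : Q S by have := maxH' S QS; rewrite H'S.
split=> //; first exact: submx_trans IH' (ltmxW H'S).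
by rewrite ltmxE SH.
Qed.

Lemma engel_in_ideal (H W M : 'M[K]_n) : (H <= I)%MS -> (I <= W)%MS -> ~~ (M <= W)%MS ->
  exists v, [/\ (v <= M)%MS, ~~ (v <= W)%MS & forall h, (h <= H)%MS -> (br h v <= W)%MS].
Proof.
move=> HsI IW /row_subPn [i Mi]; exists (row i M); split=> //; first exact: row_sub.
move=> h hH; rewrite (br_anti HL) eqmx_opp; apply: submx_trans IW.
by apply: I_ideal; exact: submx_trans hH HsI.
Qed.

Variable N : nat.
Hypothesis ad_nil : forall z v, (iter N (br z) v <= I)%MS.

(* The inductive step
   passes to a maximal subalgebra H' of H: by induction H = H' + <v> with v
   normalizing H', and the Engel iteration of ad v finishes the job. *)
Lemma engel d : forall H W M : 'M[K]_n, (\rank H <= d)%N -> (I <= H)%MS -> is_subalg H ->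
  (I <= W)%MS -> stabilizes H W -> stabilizes H M -> ~~ (M <= W)%MS ->
  exists v, [/\ (v <= M)%MS, ~~ (v <= W)%MS & forall h, (h <= H)%MS -> (br h v <= W)%MS].
Proof.
elim: d => [|d IH] H W M rH IH_ sH IW stW stM nMW.
  by apply: engel_in_ideal => //; move: rH; rewrite leqn0 mxrank_eq0 => /eqP ->; exact: sub0mx.
have [HsI|nHI] := boolP (H <= I)%MS; first exact: engel_in_ideal.
have [H' [sH' IH' H'H maxH']] := maximal_subalg sH IH_ nHI.
have rH' : (\rank H' <= d)%N by rewrite -ltnS (leq_trans (rank_ltmx H'H)).
have H'_H := ltmxW H'H.
have restrict X : stabilizes H X -> stabilizes H' X.
  by move=> stX h w hH'; apply: stX; exact: submx_trans hH' H'_H.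
have nHH' : ~~ (H <= H')%MS by move: H'H; rewrite ltmxE => /andP [].
have [v [vH nvH' nH'v]] := IH H' H' H rH' IH' sH' IH' sH' (restrict _ sH) nHH'.
have HS : (H <= H' + v)%MS.
  apply: maxH' (subalg_adjoin sH' nH'v) _ _; last by rewrite addsmx_sub H'_H vH.
  rewrite ltmxE addsmxSl /=; apply: contra nvH'; exact: submx_trans (addsmxSr _ _).
have [u0 [u0M nu0W H'u0]] := IH H' W M rH' IH' sH' IW (restrict _ stW) (restrict _ stM) nMW.
have [|u [uM nuW vu H'u]] := last_iterate_outside (fun w => stW v w vH) (fun w => stM v w vH)
  nH'v u0M nu0W H'u0 (N := N).
  exact: submx_trans (ad_nil _ _) IW.
by exists u; split=> // h hH; exact: (br_addsmxl HL) H'u vu (submx_trans hH HS).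
Qed.

Lemma engel_ideal (W : 'M[K]_n) : is_lie_ideal br W -> (I <= W)%MS -> ~~ (1%:M <= W)%MS ->
  exists v, ~~ (v <= W)%MS /\ forall x, (br x v <= W)%MS.
Proof.
move=> W_ideal IW nW.
have [|v [_ nvW Lv]] := @engel n 1%:M W 1%:M _ (submx1 I) (fun u v _ _ => submx1 _) IW
  (fun h w _ => W_ideal h w) (fun h w _ _ => submx1 (br h w)) nW; first by rewrite mxrank1.
by exists v; split=> // x; apply: Lv; exact: submx1.
Qed.

Definition brackets_into (c : nat) (W : 'M[K]_n) : Prop :=
  forall xs w, size xs = c -> (w <= W)%MS -> (iter_br br xs w <= I)%MS.

Lemma brackets_into_adjoin c (W : 'M[K]_n) (v : 'rV[K]_n) :
  is_lie_ideal br W -> brackets_into c W -> (forall x, (br x v <= W)%MS) ->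
  is_lie_ideal br (W + v)%MS /\ brackets_into c.+1 (W + v)%MS.
Proof.
move=> W_ideal Wc Lv.
have brW x w : (w <= W + v)%MS -> (br x w <= W)%MS.
  by apply: (br_addsmxr HL) => // h; exact: W_ideal.
split=> [x w /(brW x) xwW|xs w]; first exact: submx_trans xwW (addsmxSl _ _).
case/lastP: xs => [|xs x] //; rewrite size_rcons => -[sxs] wW.
by rewrite /iter_br foldr_rcons; apply: Wc => //; exact: brW.
Qed.

(* Climbing a flag of ideals from I to L, each step given by engel_ideal,
   shows that L/I is nilpotent. *)
Lemma quotient_nilpotent_of_engel : quotient_nilpotent br I.
Proof.
suff [c Lc] : exists c, brackets_into c 1%:M.
  by exists c => xs y sxs; apply: Lc => //; exact: submx1.
suff climb d W : (n - \rank W <= d)%N -> is_lie_ideal br W -> (I <= W)%MS ->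
    (exists c, brackets_into c W) -> exists c, brackets_into c 1%:M.
  by apply: (climb n I) => //; [exact: leq_subr | exists 0%N => -[]].
elim: d W => [|d IHd] W rW W_ideal IW [c Wc];
  have [full|nfull] := boolP (1%:M <= W)%MS;
  try by exists c => xs w sxs w1; apply: Wc => //; exact: submx_trans full.
  by move: nfull; rewrite sub1mx /row_full eqn_leq rank_leq_col /=; move: rW; lia.
have [v [nvW Lv]] := engel_ideal W_ideal IW nfull.
have [Wv_ideal Wvc] := brackets_into_adjoin W_ideal Wc Lv.
apply: (IHd (W + v)%MS) => //; last by exists c.+1.
- suff : (\rank W < \rank (W + v)%MS)%N by move: rW; lia.
  apply: rank_ltmx; rewrite ltmxE addsmxSl /=.
  by apply: contra nvW; exact: submx_trans (addsmxSr _ _).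
- exact: submx_trans IW (addsmxSl _ _).
Qed.

End RelativeEngel.

Section AdaptedBasis.
Variables (K : fieldType) (m k : nat).
Variables (br : 'rV[K]_(m + k) -> 'rV[K]_(m + k) -> 'rV[K]_(m + k)) (I : 'M[K]_(m + k)).
Hypothesis HL : is_lie_bracket br.
Hypothesis I_ideal : is_lie_ideal br I.
Hypothesis rankI : \rank I = m.

(* The rows of P = row_ebase I form a basis of L whose first m vectors span I. *)
Let P := row_ebase I.
Let Pinv := invmx P.
Let P_unit : P \in unitmx := row_ebase_unit I.

(* The matrix of ad z in the adapted basis, and its diagonal blocks: the
   action of ad z on I and on L/I. *)
Definition ad_adapted z := P *m ad_mx br z *m Pinv.
Definition ad_on_ideal z := ulsubmx (ad_adapted z).
Definition ad_on_quotient z := drsubmx (ad_adapted z).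

Lemma coords_ideal p (U : 'M_(p, m + k)) : (U <= I)%MS -> rsubmx (U *m Pinv) = 0.
Proof.
move=> UI; have : (U <= row_base I)%MS by rewrite eq_row_base.
case/submxP => a ->; rewrite /row_base -mulmxA mulmxK //.
apply/matrixP => i j; rewrite !mxE big1 // => l _; rewrite mxE.
have lm : (l < m)%N by move: (ltn_ord l); rewrite [X in (_ < X)%N -> _]rankI.
rewrite (_ : (l == rshift m j :> nat) = false) ?mulr0 //.
by apply/negbTE; rewrite neq_ltn /= (leq_trans lm) // leq_addr.
Qed.

Lemma basis_ideal_part : (usubmx P <= I)%MS.
Proof.
apply/row_subP => i; rewrite row_usubmx.
have im : (i < \rank I)%N by rewrite rankI.
have : (row (Ordinal im) (row_base I) <= I)%MS.
  by apply: submx_trans (row_sub _ _) _; rewrite eq_row_base.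
congr (_ <= _)%MS; apply/rowP => j; rewrite !mxE (bigD1 (lshift k i)) //= big1 ?addr0.
  by rewrite mxE eqxx im mul1r.
move=> l nl; rewrite mxE; suff /negbTE -> : (i != l :> nat) by rewrite mul0r.
by apply: contra nl => /eqP e; apply/eqP/val_inj.
Qed.

Lemma ad_adapted_ur0 z : ursubmx (ad_adapted z) = 0.
Proof.
rewrite /ursubmx /ad_adapted -[P](vsubmxK P) !mul_col_mx col_mxKu.
apply: coords_ideal; apply/row_subP => i; rewrite row_mul (ad_mxE HL); apply: I_ideal.
exact: submx_trans (row_sub _ _) basis_ideal_part.
Qed.

Lemma char_poly_ad_split z :
  char_poly (ad_mx br z) = char_poly (ad_on_ideal z) * char_poly (ad_on_quotient z).
Proof.
rewrite -(char_poly_conj _ P_unit) -/(ad_adapted z) -[ad_adapted z]submxK.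
by rewrite ad_adapted_ur0 char_poly_lblock.
Qed.

Lemma ad_on_quotient_ideal x : (x <= I)%MS -> ad_on_quotient x = 0.
Proof.
move=> xI; have : rsubmx (ad_adapted x) = 0.
  apply: coords_ideal; apply/row_subP => i.
  by rewrite row_mul (ad_mxE HL) (br_anti HL) eqmx_opp; apply: I_ideal.
move=> adx0; apply/matrixP => i j.
by have := congr1 (fun X : 'M[K]_(m + k, k) => X (rshift m i) j) adx0; rewrite !mxE.
Qed.

Lemma ad_blocks_linear a x y :
  ad_on_ideal (a *: x + y) = a *: ad_on_ideal x + ad_on_ideal y /\
  ad_on_quotient (a *: x + y) = a *: ad_on_quotient x + ad_on_quotient y.
Proof.
rewrite /ad_on_ideal /ad_on_quotient /ad_adapted (ad_mx_linear HL).
rewrite mulmxDr mulmxDl -!scalemxAr -scalemxAl.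
by split; apply/matrixP => i j; rewrite !mxE.
Qed.

Lemma ad_nilpotent_mod_ideal z v :
  char_poly (ad_on_quotient z) = 'X^k -> (iter k (br z) v <= I)%MS.
Proof.
move=> chi_z; rewrite (iter_ad HL).
have ad_exp j : (ad_mx br z) ^+ j = Pinv *m (ad_adapted z) ^+ j *m P.
  elim: j => [|j IH]; first by rewrite !expr0 mulmx1 mulVmx.
  by rewrite !exprSr -!mulmxE IH /ad_adapted !mulmxA mulmxKV // mulVmx // mul1mx.
have [urk drk] := lblock_exp k (ad_adapted_ur0 z).
rewrite -/(ad_on_quotient z) char_poly_Xn_nilpotent // in drk.
rewrite ad_exp -[(ad_adapted z) ^+ k]submxK urk drk !mulmxA.
rewrite -[v *m Pinv](hsubmxK (v *m Pinv)) mul_row_block !mulmx0 addr0.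
rewrite -[P](vsubmxK P) mul_row_col mul0mx addr0.
exact: submx_trans (submxMl _ _) basis_ideal_part.
Qed.

Hypothesis Kinf : infinite_field K.
Hypothesis Lreg : regular_lie br.
Hypothesis I_nz : (0 < m)%N.

Lemma ideal_nonzero_elt : exists2 x : 'rV[K]_(m + k), (x <= I)%MS & x != 0.
Proof. by apply/rowV0Pn; rewrite -mxrank_eq0 rankI -lt0n. Qed.

(* A nonzero x in I is regular and kills L/I, so chi_{ad x} = chi_{ad x on I} * t^k:
   hence rk L >= k and a_{rk L - k} of ad x on I is nonzero. *)
Lemma rank_of_ideal_elt x : (x <= I)%MS -> x != 0 ->
  exists r, [/\ is_lie_rank br r, (k <= r)%N & (char_poly (ad_on_ideal x))`_(r - k) != 0].
Proof.
move=> xI x_nz; have [r [rk_r]] := Lreg x_nz.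
have chi0 : char_poly (0 : 'M[K]_k) = 'X^k.
  by rewrite /char_poly /char_poly_mx map_mx0 subr0 det_scalar.
rewrite /chi_coef char_poly_ad_split ad_on_quotient_ideal // chi0 coefMXn.
by case: ltnP => [|kr cx]; [rewrite eqxx | exists r].
Qed.

(* Otherwise chi of
   ad z on L/I has a nonzero coefficient in some degree b < k; on the line
   through x in I and z, the coefficients of degree r - k (on I) and b (on L/I)
   are polynomials in the parameter, nonzero at x resp. z, hence both nonzero
   at a common point y, and chi_{ad y} gets a nonzero coefficient below r. *)
Lemma char_poly_ad_on_quotient z : char_poly (ad_on_quotient z) = 'X^k.
Proof.
have [x xI x_nz] := ideal_nonzero_elt.
have [r [[_ below_r] kr cx]] := rank_of_ideal_elt xI x_nz.
apply/eqP/negPn/negP => nXk.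
have [b bk cz] := monic_low_coef (char_poly_monic _) (size_char_poly _) nXk.
have [f Hf] := char_poly_line (ad_on_ideal x) (ad_on_ideal (z - x)) (r - k).
have [g Hg] := char_poly_line (ad_on_quotient x) (ad_on_quotient (z - x)) b.
have line t :
    ad_on_ideal (t *: (z - x) + x) = ad_on_ideal x + t *: ad_on_ideal (z - x) /\
    ad_on_quotient (t *: (z - x) + x) = ad_on_quotient x + t *: ad_on_quotient (z - x).
  by have [-> ->] := ad_blocks_linear t (z - x) x; split; rewrite addrC.
have f_nz : f != 0.
  apply: contraNneq cx => f0.
  by have := Hf 0; rewrite scale0r addr0 f0 horner0 => ->; rewrite eqxx.
have g_nz : g != 0.
  apply: contraNneq cz => g0.
  by have := Hg 1; rewrite -(proj2 (line 1)) scale1r subrK g0 horner0 => ->; rewrite eqxx.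
have [t [ft gt]] := common_nonroot Kinf f_nz g_nz.
have [ey eq] := line t.
have [j [jle]] := coefM_low (a := r - k) (b := b) (p := char_poly (ad_on_ideal (t *: (z - x) + x)))
  (q := char_poly (ad_on_quotient (t *: (z - x) + x))) ltac:(by rewrite ey Hf) ltac:(by rewrite eq Hg).
by rewrite -char_poly_ad_split -/(chi_coef br j _) below_r ?eqxx //; move: jle kr bk; lia.
Qed.

Lemma quotient_nilpotent_adapted : quotient_nilpotent br I.
Proof.
apply: (quotient_nilpotent_of_engel HL I_ideal (N := k)) => z v.
exact/ad_nilpotent_mod_ideal/char_poly_ad_on_quotient.
Qed.

End AdaptedBasis.

Unset Implicit Arguments.

Theorem lemma4 (K : fieldType) (n : nat)
  (br : 'rV[K]_n -> 'rV[K]_n -> 'rV[K]_n) (I : 'M[K]_n) :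
  infinite_field K ->
  is_lie_bracket br ->
  regular_lie br ->
  is_lie_ideal br I ->
  (0 < \rank I)%N -> (\rank I < n)%N ->
  quotient_nilpotent br I.
Proof.
move=> Kinf HL Lreg I_ideal I_nz _.
(* Transport to dimension m + k with m = dim I, where the adapted basis lives. *)
suff adapted n' m k (e : (m + k)%N = n') (br' : 'rV[K]_n' -> 'rV[K]_n' -> 'rV[K]_n')
    (I' : 'M[K]_n') : is_lie_bracket br' -> regular_lie br' -> is_lie_ideal br' I' ->
    \rank I' = m -> (0 < m)%N -> quotient_nilpotent br' I'.
  exact: adapted (subnKC (rank_leq_col I)) br I HL Lreg I_ideal erefl I_nz.
by case: n' / e in br' I' * => *; apply: quotient_nilpotent_adapted.
Qed.
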